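(* For all $x,y\ge 1$ and $n>\max(x,y)$, the minimum possible number of edges in any $(x,y)$ task-dependency graph produced by the $(x,y)$ edge-addition process on $n$ vertices is $n-\min(x,y)$.
   Context: A task-dependency graph is a finite directed acyclic graph (no loops, no multiple edges). A vertex is initial if it has in-degree $0$ and terminal if it has out-degree $0$ (an isolated vertex is both). An $(x,y)$ task-dependency graph has exactly $x$ initial and exactly $y$ terminal vertices. The $(x,y)$ edge-addition process on $n$ vertices: start with the empty graph on $\{1,\dots,n\}$ and repeatedly add, uniformly at random, an edge $(a,b)$ with $a<b$ not yet present; if an addition would cause fewer than $x$ initial vertices or fewer than $y$ terminal vertices, it is cancelled. The process halts if the graph after some edge addition is an $(x,y)$ task-dependency graph, or if no more edges can be added; the produced graph is the final graph (over all possible runs). *)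

From mathcomp Require Import all_boot.
Set Implicit Arguments. Unset Strict Implicit. Unset Printing Implicit Defensive.

(* A directed graph on vertex set {0,...,n-1} ('I_n) is given by its edge set:
   a set of ordered pairs (a,b) meaning an edge a -> b. *)
Definition graph (n : nat) := {set 'I_n * 'I_n}.

Definition edge_rel n (G : graph n) : rel 'I_n := fun u v => (u, v) \in G.

(* acyclic: no edge (a,b) with a directed path from b back to a (this also
   excludes loops). *)
Definition acyclic n (G : graph n) : bool :=
  [forall a, forall b, ((a, b) \in G) ==> ~~ connect (edge_rel G) b a].

Definition initial_vertices n (G : graph n) : {set 'I_n} :=
  [set v | [forall u, (u, v) \notin G]].
Definition terminal_vertices n (G : graph n) : {set 'I_n} :=
  [set v | [forall w, (v, w) \notin G]].

Definition is_TDG (x y n : nat) (G : graph n) : bool :=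
  [&& acyclic G, #|initial_vertices G| == x & #|terminal_vertices G| == y].

(* A non-cancelled edge addition from G to G' in the (x,y) process. *)
Definition add_step (x y n : nat) (G G' : graph n) : Prop :=
  exists a b : 'I_n, [/\ a < b, (a, b) \notin G, G' = (a, b) |: G,
    x <= #|initial_vertices G'| & y <= #|terminal_vertices G'|].

(* Graphs reachable by a run that has not yet halted before reaching it.
   The process halts only after an edge addition produces an (x,y) TDG, so
   the process continues from G if G is the start graph or G is not an
   (x,y) TDG.  Cancelled additions leave the graph unchanged. *)
Inductive reachable (x y n : nat) : graph n -> Prop :=
| reach_start : reachable x y set0
| reach_step G G' : reachable x y G -> (G = set0 \/ ~~ is_TDG x y G) ->
    add_step x y G G' -> reachable x y G'.

Definition final_graph (x y n : nat) (G : graph n) : Prop :=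
  reachable x y G /\
  ((G <> set0 /\ is_TDG x y G) \/ (forall G', ~ add_step x y G G')).

From mathcomp Require Import all_boot.
From mathcomp Require Import zify.

Set Implicit Arguments. Unset Strict Implicit. Unset Printing Implicit Defensive.

(* Every non-initial vertex is the head of some edge, so a graph with e edges
   on n vertices has at least n - e initial and n - e terminal vertices; hence
   an (x,y) task-dependency graph has at least n - min(x,y) edges.
   Conversely, let G be an (x,y) task-dependency graph with exactly
   n - min(x,y) edges, all of the form a -> b with a < b.  Adding the edges
   of G one by one, in any order, is a run of the process: no addition is
   cancelled, because the numbers of initial and terminal vertices only
   decrease along the run and end at x and y, and the run cannot halt early,
   because each earlier graph has too few edges to be an (x,y)
   task-dependency graph.  With s = min(x,y), the edges
   min(i, n-1-y) -> max(i+s, x) for i < n - s form such a G: their heads are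
   exactly the vertices >= x and their tails exactly the vertices < n - y. *)

Section Counting.
Variable n : nat.
Implicit Types G : graph n.

Lemma initial_verticesE G : initial_vertices G = ~: [set e.2 | e in G].
Proof.
apply/setP => v; rewrite !inE; apply/forallP/negP => [noin /imsetP [e eG ev] | vout u].
  by move: (noin e.1); rewrite ev -surjective_pairing eG.
by apply/negP => uvG; apply: vout; apply/imsetP; exists (u, v).
Qed.

Lemma terminal_verticesE G : terminal_vertices G = ~: [set e.1 | e in G].
Proof.
apply/setP => v; rewrite !inE; apply/forallP/negP => [noout /imsetP [e eG ev] | vin w].
  by move: (noout e.2); rewrite ev -surjective_pairing eG.
by apply/negP => vwG; apply: vin; apply/imsetP; exists (v, w).
Qed.

Lemma initial_verticesS G G' :
  G \subset G' -> initial_vertices G' \subset initial_vertices G.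
Proof. by move=> sGG'; rewrite !initial_verticesE setCS imsetS. Qed.

Lemma terminal_verticesS G G' :
  G \subset G' -> terminal_vertices G' \subset terminal_vertices G.
Proof. by move=> sGG'; rewrite !terminal_verticesE setCS imsetS. Qed.

Lemma card_initial_vertices_geq G : n - #|G| <= #|initial_vertices G|.
Proof.
rewrite initial_verticesE.
have := cardsC [set e.2 | e in G]; rewrite card_ord => {1}<-.
by rewrite leq_subLR leq_add2r leq_imset_card.
Qed.

Lemma card_terminal_vertices_geq G : n - #|G| <= #|terminal_vertices G|.
Proof.
rewrite terminal_verticesE.
have := cardsC [set e.1 | e in G]; rewrite card_ord => {1}<-.
by rewrite leq_subLR leq_add2r leq_imset_card.
Qed.

Lemma TDG_card_geq x y G : is_TDG x y G -> n - minn x y <= #|G|.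
Proof.
case/and3P => _ /eqP init_x /eqP term_y.
have := card_initial_vertices_geq G; have := card_terminal_vertices_geq G.
rewrite init_x term_y; lia.
Qed.

Lemma forward_acyclic G : {in G, forall e : 'I_n * 'I_n, e.1 < e.2} -> acyclic G.
Proof.
move=> fwd; apply/forallP => a; apply/forallP => b; apply/implyP => abG.
apply/negP => /connectP [p bp a_last].
have /order_path_min le_b_p : path (fun u v : 'I_n => u <= v) b p.
  by apply: sub_path bp => u v uvG; apply: ltnW (fwd (u, v) uvG).
have /allP le_b_bp : all (fun v : 'I_n => b <= v) (b :: p).
  by rewrite /= leqnn le_b_p //; apply: leq_trans.
by have := le_b_bp _ (mem_last b p); rewrite -a_last leqNgt (fwd _ abG).
Qed.

End Counting.

Lemma card_ord_lt n k : k <= n -> #|[set i : 'I_n | i < k]| = k.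
Proof.
move=> le_kn.
have -> : [set i : 'I_n | i < k] = [set widen_ord le_kn j | j : 'I_k].
  apply/setP => i; rewrite inE; apply/idP/imsetP => [lt_ik | [j _ ->]].
    by exists (Ordinal lt_ik) => //; apply: val_inj.
  exact: (ltn_ord j).
by rewrite card_imset ?card_ord // => i j /(congr1 val) /= /val_inj.
Qed.

Section MinimalRun.
Variables (x y n : nat) (G : graph n).
Hypotheses (G_forward : {in G, forall e : 'I_n * 'I_n, e.1 < e.2})
  (G_TDG : is_TDG x y G) (G_card : #|G| = n - minn x y).

Lemma reachable_take_enum k : k <= #|G| -> reachable x y [set:: take k (enum G)].
Proof.
elim: k => [_ | k IHk lt_kG]; first by rewrite take0 set_nil; apply: reach_start.
have [e0 _] : exists e, e \in G by apply/card_gt0P; apply: leq_ltn_trans lt_kG.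
have lt_k_enum : k < size (enum G) by rewrite -cardE.
set e := nth e0 (enum G) k.
have eG : e \in G by rewrite -mem_enum mem_nth.
have e_fresh : e \notin take k (enum G).
  have := take_uniq k.+1 (enum_uniq G).
  by rewrite (take_nth e0) // rcons_uniq => /andP [].
have prefix_sub j : [set:: take j (enum G)] \subset G.
  by apply/subsetP => f; rewrite inE => /mem_take; rewrite mem_enum.
case/and3P: G_TDG => _ /eqP init_x /eqP term_y.
apply: reach_step (IHk (ltnW lt_kG)) _ _.
  have card_prefix : #|[set:: take k (enum G)]| = k.
    by rewrite cardsE (card_uniqP _) ?take_uniq ?enum_uniq // size_takel // ltnW.
  by right; apply/negP => /TDG_card_geq; rewrite card_prefix; lia.
exists e.1, e.2; rewrite -surjective_pairing inE; split.
- exact: G_forward.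
- exact: e_fresh.
- by apply/setP => f; rewrite (take_nth e0) // !inE mem_rcons.
- by rewrite -init_x subset_leq_card ?initial_verticesS ?prefix_sub.
- by rewrite -term_y subset_leq_card ?terminal_verticesS ?prefix_sub.
Qed.

Lemma minimal_TDG_final : 0 < #|G| -> final_graph x y G.
Proof.
move=> G_gt0; split.
  by rewrite -(set_enum G) -(take_size (enum G)) -cardE; apply: reachable_take_enum.
by left; split => // G0; move: G_gt0; rewrite G0 cards0.
Qed.

End MinimalRun.

Section Chain.
Variables (x y n : nat).
Hypotheses (x_gt0 : 0 < x) (y_gt0 : 0 < y) (xy_le_n : maxn x y <= n).

(* The vertex set is 'I_n.+1, so [n - y] below is the n-1-y of the header. *)

Definition chain_edge (i : nat) : 'I_n.+1 * 'I_n.+1 :=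
  (inord (minn i (n - y)), inord (maxn (i + minn x y) x)).

Definition chain_graph : graph n.+1 :=
  [set:: [seq chain_edge i | i <- iota 0 (n.+1 - minn x y)]].

Lemma chain_graphP e :
  reflect (exists2 i, i < n.+1 - minn x y & e = chain_edge i) (e \in chain_graph).
Proof.
rewrite inE; apply: (iffP mapP) => [[i] | [i lt_i ->]].
  by rewrite mem_iota => /andP [_ lt_i] ->; exists i.
by exists i; rewrite // mem_iota.
Qed.

Lemma chain_graph_forward : {in chain_graph, forall e : 'I_n.+1 * 'I_n.+1, e.1 < e.2}.
Proof. by move=> e /chain_graphP [i lt_i ->] /=; rewrite !inordK; lia. Qed.

Lemma card_chain_graph : #|chain_graph| = n.+1 - minn x y.
Proof.
have chain_uniq : uniq [seq chain_edge i | i <- iota 0 (n.+1 - minn x y)].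
  rewrite map_inj_in_uniq ?iota_uniq // => i j; rewrite !mem_iota.
  move=> lt_i lt_j [] /(congr1 (@nat_of_ord _)) + /(congr1 (@nat_of_ord _)).
  by rewrite !inordK; lia.
by rewrite /chain_graph cardsE (card_uniqP chain_uniq) size_map size_iota.
Qed.

Lemma chain_graph_heads : [set e.2 | e in chain_graph] = ~: [set v : 'I_n.+1 | v < x].
Proof.
apply/setP => v; rewrite !inE -leqNgt; apply/imsetP/idP.
  by case=> e /chain_graphP [i lt_i ->] ->; rewrite /= inordK; lia.
move=> le_xv; have lt_vn := ltn_ord v.
exists (chain_edge (v - minn x y)).
  by apply/chain_graphP; exists (v - minn x y) => //; lia.
by apply: val_inj; rewrite /= inordK; lia.
Qed.

Lemma chain_graph_tails : [set e.1 | e in chain_graph] = [set v : 'I_n.+1 | v < n.+1 - y].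
Proof.
apply/setP => v; rewrite !inE; apply/imsetP/idP.
  by case=> e /chain_graphP [i lt_i ->] ->; rewrite /= inordK; lia.
move=> lt_v; exists (chain_edge v).
  by apply/chain_graphP; exists (nat_of_ord v) => //; lia.
by apply: val_inj; rewrite /= inordK; lia.
Qed.

Lemma chain_graph_TDG : is_TDG x y chain_graph.
Proof.
rewrite /is_TDG forward_acyclic; last exact: chain_graph_forward.
rewrite initial_verticesE terminal_verticesE chain_graph_heads chain_graph_tails.
rewrite setCK card_ord_lt ?eqxx /=; last lia.
rewrite cardsCs setCK card_ord card_ord_lt ?leq_subr // subKn //; lia.
Qed.

End Chain.

Theorem mainTheorem11 (x y n : nat) :
  1 <= x -> 1 <= y -> maxn x y < n ->
  (exists G : graph n, [/\ final_graph x y G, is_TDG x y G & #|G| = n - minn x y])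
  /\ (forall G : graph n, final_graph x y G -> is_TDG x y G -> n - minn x y <= #|G|).
Proof.
move=> x_gt0 y_gt0; case: n => [// | n] xy_lt_n.
split; last by move=> G _; apply: TDG_card_geq.
have chain_TDG := chain_graph_TDG x_gt0 y_gt0 xy_lt_n.
have chain_card := card_chain_graph x_gt0 y_gt0 xy_lt_n.
exists (chain_graph x y n); split => //.
apply: minimal_TDG_final => //; last by rewrite chain_card; lia.
exact: chain_graph_forward.
Qed.
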